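(* Let $X=\nu_{d_1,\dots,d_k}(\mathbb{P}^{n_1}\times\cdots\times\mathbb{P}^{n_k})\subset\mathbb{P}^N$ and $p\in\mathbb{P}^N$. Let $\Gamma\subset\mathbb{P}^{n_1}\times\cdots\times\mathbb{P}^{n_k}$ be a minimal zero-dimensional scheme such that $p\in\langle\nu_{d_1,\dots,d_k}(\Gamma)\rangle$, and for each $i$ let $L_i=\langle\pi_i(\Gamma)\rangle\subset\mathbb{P}^{n_i}$, a linear subspace of dimension $m_i\le\deg(\pi_i(\Gamma))-1$. Then $r_X(p)=r_Y(p)$, where $Y=\nu_{d_1,\dots,d_k}(L_1\times\cdots\times L_k)\cong\nu_{d_1,\dots,d_k}(\mathbb{P}^{m_1}\times\cdots\times\mathbb{P}^{m_k})$. In particular, if $\deg(\pi_i(\Gamma))=1$ for some $i$, then $L_i$ is a point and $Y$ is isomorphic to the Segre-Veronese variety of the product of the remaining $k-1$ factors $\mathbb{P}^{m_j}$, $j\neq i$, embedded with multidegree $(d_j)_{j\ne i}$.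
   Context: Work over an algebraically closed field. $\nu_{d_1,\dots,d_k}$ is the Segre-Veronese embedding by $|\mathcal{O}(d_1,\dots,d_k)|$; $\pi_i:\mathbb{P}^{n_1}\times\cdots\times\mathbb{P}^{n_k}\to\mathbb{P}^{n_i}$ is the $i$-th projection and $\pi_i(\Gamma)$ the scheme-theoretic image. $\langle\cdot\rangle$ is linear span. For a subvariety $W\subset\mathbb{P}^N$, the $W$-rank $r_W(p)$ of $p\in\langle W\rangle$ is the minimal $s$ such that $p$ lies in the span of $s$ points of $W$. *)

From HB Require Import structures.
From mathcomp Require Import all_boot all_order all_algebra.
Set Implicit Arguments. Unset Strict Implicit. Unset Printing Implicit Defensive.
Import GRing.Theory.
Local Open Scope ring_scope.

(* Ambient: P^{n_0} x ... x P^{n_{k-1}} over a field F.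
   Variables x_{i,j}, i < k, j <= n_i.  A multidegree is a function 'I_k -> nat. *)
Section SegreVeronese.
Variable F : fieldType.
Variable k : nat.
Variable n : 'I_k -> nat.

Definition var := {i : 'I_k & 'I_(n i).+1}.
Definition mvar (i : 'I_k) (j : 'I_(n i).+1) : var := Tagged (fun i => 'I_(n i).+1) j.

Definition multideg := {ffun 'I_k -> nat}.
Definition monomial := {ffun var -> nat}.

Definition mdeg (m : monomial) : multideg :=
  [ffun i => (\sum_(j < (n i).+1) m (@mvar i j))%N].

Definition unitmd (i : 'I_k) : multideg := [ffun j => nat_of_bool (j == i)].
Definition addmd (a b : multideg) : multideg := [ffun i => (a i + b i)%N].
Definition constmd (t : nat) : multideg := [ffun _ => t].

(* A multihomogeneous mform (or a vector of coordinates of P^N indexed by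
   monomials): a coefficient function on monomials. *)
Definition mform := monomial -> F.
Definition homog (a : multideg) (f : mform) : Prop :=
  forall m, f m != 0 -> mdeg m = a.

Definition mulmon (mu : monomial) (f : mform) : mform :=
  fun m => if [forall v, (mu v <= m v)%N] then f [ffun v => (m v - mu v)%N] else 0.

(* finite enumeration of the monomials of multidegree a *)
Definition mbound (a : multideg) : nat := (\max_(i < k) a i)%N.
Definition toN (a : multideg) (e : {ffun var -> 'I_(mbound a).+1}) : monomial :=
  [ffun v => nat_of_ord (e v)].

Definition evalf (a : multideg) (f : mform) (x : var -> F) : F :=
  \sum_(e : {ffun var -> 'I_(mbound a).+1} | mdeg (toN e) == a)
     f (toN e) * \prod_(v : var) x v ^+ (e v).

(* the linear mform f (of degree a) paired with the coordinate vector p *)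
Definition pairing (a : multideg) (f : mform) (p : mform) : F :=
  \sum_(e : {ffun var -> 'I_(mbound a).+1} | mdeg (toN e) == a)
     f (toN e) * p (toN e).

Definition sv (d : multideg) (x : var -> F) : mform :=
  fun m => if mdeg m == d then \prod_(v : var) x v ^+ (m v) else 0.

(* ----- closed subschemes = B-saturated multihomogeneous ideals -----
   I a f  means  f is in the degree-a component I_a. *)
Definition mideal := multideg -> mform -> Prop.

Record homog_ideal (I : mideal) : Prop := {
  hi_homog : forall a f, I a f -> homog a f;
  hi_zero  : forall a, I a (fun _ => 0);
  hi_add   : forall a f g, I a f -> I a g -> I a (fun m => f m + g m);
  hi_scale : forall a c f, I a f -> I a (fun m => c * f m);
  hi_mul   : forall a f mu, I a f -> I (addmd a (mdeg mu)) (mulmon mu f)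
}.

(* saturation w.r.t. the irrelevant ideal B = m_0 ... m_{k-1};
   B^t is generated by the monomials of multidegree (t,...,t) *)
Definition saturated (I : mideal) : Prop :=
  forall a f, homog a f ->
    (exists t, forall mu : monomial, mdeg mu = constmd t ->
        I (addmd a (mdeg mu)) (mulmon mu f)) -> I a f.

Definition closed_subscheme (I : mideal) : Prop := homog_ideal I /\ saturated I.

(* zero-dimensional: bounded Hilbert function, i.e. there is r with
   dim S_a / I_a <= r for every multidegree a *)
Definition zero_dim_scheme (I : mideal) : Prop :=
  closed_subscheme I /\
  exists r : nat, forall a (g : 'I_r.+1 -> mform), (forall t, homog a (g t)) ->
    exists c : 'I_r.+1 -> F, (exists t, c t != 0) /\
      I a (fun m => \sum_(t < r.+1) c t * g t m).

Definition subscheme (J I : mideal) : Prop := forall a f, I a f -> J a f.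

(* p lies in the linear span < nu_d(Gamma) >: every linear mform on P^N
   vanishing on nu_d(Gamma) (= element of I_d) vanishes at p *)
Definition in_span_scheme (I : mideal) (d : multideg) (p : mform) : Prop :=
  forall f, I d f -> pairing d f p = 0.

Definition blocknz (x : var -> F) (i : 'I_k) : Prop := exists j : 'I_(n i).+1, x (@mvar i j) != 0.

Definition in_product (x : var -> F) : Prop := forall i, blocknz x i.

(* points of L_0 x ... x L_{k-1}, L_i = < pi_i(Gamma) >, cut out by the linear
   forms in I cap F[x_i], i.e. by I_{e_i} *)
Definition in_spans_proj (I : mideal) (x : var -> F) : Prop :=
  forall i, blocknz x i /\ forall f, I (unitmd i) f -> evalf (unitmd i) f x = 0.

Definition rank_le (P : (var -> F) -> Prop) (d : multideg) (p : mform) (s : nat) : Prop :=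
  exists (xs : 'I_s -> var -> F) (c : 'I_s -> F),
    (forall t, P (xs t)) /\ forall m, p m = \sum_(t < s) c t * sv d (xs t) m.

Definition is_rank (P : (var -> F) -> Prop) (d : multideg) (p : mform) (r : nat) : Prop :=
  rank_le P d p r /\ forall s, (s < r)%N -> ~ rank_le P d p s.

End SegreVeronese.

From mathcomp Require Import all_boot all_order all_algebra.
From Stdlib Require Import Classical ClassicalEpsilon FunctionalExtensionality.
From mathcomp Require Import zify ring.
(* Let W_i be the linear forms on the i-th factor that lie in I, so that L_i is their
   common zero set, and let P_i be a projection onto the zero set of W_i such that
   the rows of 1 - P_i lie in W_i.  Writing P x for the blockwise image of x, every
   x_j - (P x)_j is a form of I, hence by induction on degree so is x^m - (P x)^m for
   every monomial m.  Pairing these forms with p, which lies in the span of nu(Gamma),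
   turns any decomposition p = sum_t c_t nu(x_t) into p = sum_t c_t nu(P x_t).  The
   points P x_t lie on L_1 x ... x L_k except when some block vanishes, and then
   nu(P x_t) = 0 because every d_i > 0, so these terms can be dropped.  Hence X-rank
   and Y-rank agree. *)

Set Implicit Arguments. Unset Strict Implicit. Unset Printing Implicit Defensive.
Import GRing.Theory.
Local Open Scope ring_scope.

Section Monomials.
Variables (k : nat) (n : 'I_k -> nat).

Definition mon0 : monomial n := [ffun _ => 0%N].
Definition mon_var (v : var n) : monomial n := [ffun u => nat_of_bool (u == v)].
Definition addm (m1 m2 : monomial n) : monomial n := [ffun u => (m1 u + m2 u)%N].
Definition subm (m1 m2 : monomial n) : monomial n := [ffun u => (m1 u - m2 u)%N].
Definition mon_dvd (m1 m2 : monomial n) : bool := [forall v, (m1 v <= m2 v)%N].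

Lemma addmdC (a b : multideg k) : addmd a b = addmd b a.
Proof. by apply/ffunP => i; rewrite !ffunE addnC. Qed.

Lemma mdeg_addm (m1 m2 : monomial n) :
  mdeg (addm m1 m2) = addmd (mdeg m1) (mdeg m2).
Proof.
apply/ffunP => i; rewrite /mdeg /addmd !ffunE -big_split /=.
by apply: eq_bigr => j _; rewrite ffunE.
Qed.

Lemma addmdI (a b c : multideg k) : addmd a c = addmd b c -> a = b.
Proof.
move/ffunP => h; apply/ffunP => i; have := h i.
by rewrite !ffunE => /eqP; rewrite eqn_add2r => /eqP.
Qed.

Lemma mvar_tag (i i' : 'I_k) (j : 'I_(n i).+1) (j' : 'I_(n i').+1) :
  @mvar k n i j = @mvar k n i' j' -> i = i'.
Proof. by move/(congr1 tag). Qed.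

Lemma eq_mvar (i : 'I_k) (j j' : 'I_(n i).+1) :
  (@mvar k n i j == mvar j') = (j == j').
Proof. by rewrite /mvar eq_Tagged. Qed.

Lemma mdeg_mon_var (i : 'I_k) (j : 'I_(n i).+1) : mdeg (mon_var (mvar j)) = unitmd i.
Proof.
apply/ffunP => i'; rewrite /mdeg /unitmd !ffunE.
have [->|ne] := eqVneq i' i.
  rewrite (bigD1 j) //= ffunE eq_mvar eqxx big1 // => j' nj.
  by rewrite ffunE eq_mvar (negbTE nj).
rewrite big1 // => j' _; rewrite ffunE.
by case: eqP => // /mvar_tag e; rewrite e eqxx in ne.
Qed.

Lemma eq_mon_var (i : 'I_k) (j j' : 'I_(n i).+1) :
  (mon_var (mvar j) == mon_var (mvar j')) = (j == j').
Proof.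
apply/eqP/eqP => [/ffunP /(_ (mvar j))|->//].
by rewrite !ffunE eqxx eq_mvar; case: eqP.
Qed.

Lemma mdeg_unitmd (i : 'I_k) (m : monomial n) :
  mdeg m = unitmd i -> exists j, m = mon_var (@mvar k n i j).
Proof.
move=> /ffunP h.
have hi := h i; rewrite /mdeg /unitmd !ffunE eqxx in hi.
have [j hj] : exists j, m (@mvar k n i j) != 0%N.
  apply/existsP; apply: contraT; rewrite negb_exists => /forallP h0.
  by rewrite big1 in hi => // j _; apply/eqP; have := h0 j; rewrite negbK.
move: hi; rewrite (bigD1 j) //= => hi.
have hj1 : m (mvar j) = 1%N by move: hi hj; case: (m (mvar j)) => [|[|]].
move: hi; rewrite hj1 => /eqP; rewrite -{2}[1%N]addn0 eqn_add2l sum_nat_eq0.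
move=> /forallP hz; exists j; apply/ffunP => -[i' j']; rewrite ffunE.
have [e|ne] := eqVneq i' i.
  subst i'; rewrite -/(mvar j') eq_mvar.
  by have [->|nj] //= := eqVneq j' j; apply/eqP; exact: (implyP (hz j') nj).
have hi' := h i'; rewrite /mdeg /unitmd !ffunE (negbTE ne) in hi'.
move/eqP: hi'; rewrite sum_nat_eq0 => /forallP /(_ j') /eqP ->.
by case: eqP => // /mvar_tag e; rewrite e eqxx in ne.
Qed.

Lemma entry_le_mbound (a : multideg k) (m : monomial n) (v : var n) :
  mdeg m = a -> (m v <= mbound a)%N.
Proof.
move=> <-; apply: (@leq_trans (mdeg m (tag v))).
  by case: v => i j; rewrite /mdeg ffunE (bigD1 j) //= leq_addr.
by apply: (@leq_bigmax _ (fun i => mdeg m i)).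
Qed.

Lemma toN_inj (a : multideg k) : injective (@toN k n a).
Proof.
move=> e1 e2 /ffunP h; apply/ffunP => v; apply: val_inj.
by have := h v; rewrite !ffunE.
Qed.

Lemma toN_onto (a : multideg k) (m : monomial n) :
  mdeg m = a -> toN [ffun v => inord (m v) : 'I_(mbound a).+1] = m.
Proof. by move=> hm; apply/ffunP => v; rewrite !ffunE inordK // ltnS entry_le_mbound. Qed.

Lemma addmK (mu m : monomial n) : subm (addm m mu) mu = m.
Proof. by apply/ffunP => v; rewrite !ffunE addnK. Qed.

Lemma submK (mu m : monomial n) : mon_dvd mu m -> addm (subm m mu) mu = m.
Proof. by move/forallP => h; apply/ffunP => v; rewrite !ffunE subnK. Qed.

Lemma mon_dvd_addm (mu m : monomial n) : mon_dvd mu (addm m mu).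
Proof. by apply/forallP => v; rewrite ffunE leq_addl. Qed.

Lemma sum_mon_var (v : var n) : (\sum_u mon_var v u)%N = 1%N.
Proof. by rewrite (bigD1 v) //= ffunE eqxx big1 // => u nu; rewrite ffunE (negbTE nu). Qed.

Lemma monomial_ind (Q : monomial n -> Prop) :
  Q mon0 -> (forall m v, Q m -> Q (addm m (mon_var v))) -> forall m, Q m.
Proof.
move=> Q0 QS m; have [N] := ubnP (\sum_u m u)%N.
elim: N m => // N IH m hN.
have [m0|] := boolP [forall u, m u == 0%N].
  suff -> : m = mon0 by [].
  by apply/ffunP => u; rewrite ffunE; apply/eqP; exact: (forallP m0).
rewrite negb_forall => /existsP [v hv].
pose m' : monomial n := [ffun u => (m u - (u == v))%N].
have hm : m = addm m' (mon_var v).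
  apply/ffunP => u; rewrite !ffunE.
  by case: eqP => [->|_]; [rewrite subnK // lt0n | rewrite subn0 addn0].
rewrite hm; apply/QS/IH; move: hN; rewrite hm.
rewrite (eq_bigr (fun u => m' u + mon_var v u)%N) => [|u _]; last by rewrite ffunE.
by rewrite big_split /= sum_mon_var addn1 ltnS.
Qed.

End Monomials.

Arguments mon0 {k n}.

Section Forms.
Variables (F : fieldType) (k : nat) (n : 'I_k -> nat).
Implicit Types (a b : multideg k) (m mu : monomial n) (x : var n -> F) (f g : mform F n).

Definition xpow x m : F := \prod_v x v ^+ m v.

Definition msum a (G : monomial n -> F) : F :=
  \sum_(e : {ffun var n -> 'I_(mbound a).+1} | mdeg (toN e) == a) G (toN e).

Lemma evalfE a f x : evalf a f x = msum a (fun m => f m * xpow x m).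
Proof.
apply: eq_bigr => e _; congr (_ * _).
by apply: eq_bigr => v _; rewrite ffunE.
Qed.

Lemma pairingE a f (q : mform F n) : pairing a f q = msum a (fun m => f m * q m).
Proof. by []. Qed.

Lemma msum_ext a (G1 G2 : monomial n -> F) :
  (forall m, mdeg m = a -> G1 m = G2 m) -> msum a G1 = msum a G2.
Proof. by move=> h; apply: eq_bigr => e /eqP /h. Qed.

Lemma msumZ a c (G : monomial n -> F) : msum a (fun m => c * G m) = c * msum a G.
Proof. by rewrite /msum mulr_sumr. Qed.

Lemma msum_sum a (T : Type) (r : seq T) (G : T -> monomial n -> F) :
  msum a (fun m => \sum_(t <- r) G t m) = \sum_(t <- r) msum a (G t).
Proof. by rewrite /msum exchange_big. Qed.

Lemma msumC a b (H : monomial n -> monomial n -> F) :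
  msum a (fun m => msum b (H m)) = msum b (fun m' => msum a (H^~ m')).
Proof. by rewrite /msum exchange_big. Qed.

Lemma msum_delta a m0 (G : monomial n -> F) :
  mdeg m0 = a -> msum a (fun m => (m == m0)%:R * G m) = G m0.
Proof.
move=> hm0; pose e0 : {ffun var n -> 'I_(mbound a).+1} := [ffun v => inord (m0 v)].
have he0 : toN e0 = m0 by exact: toN_onto.
rewrite /msum (bigD1 e0) /=; last by rewrite he0 hm0.
rewrite he0 eqxx mul1r big1 ?addr0 // => e /andP [_ ne].
by rewrite -he0 (inj_eq (@toN_inj _ _ _)) (negbTE ne) mul0r.
Qed.

Lemma msum_shift a mu (G : monomial n -> F) :
  msum (addmd a (mdeg mu)) (fun m => if mon_dvd mu m then G (subm m mu) else 0) = msum a G.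
Proof.
set b := addmd a (mdeg mu).
transitivity (msum b (fun m => msum a (fun m0 => (m == addm m0 mu)%:R * G m0))).
  apply: msum_ext => m hm; case: ifP => hle.
    have hdeg : mdeg (subm m mu) = a.
      by apply: (addmdI (c := mdeg mu)); rewrite -mdeg_addm submK.
    rewrite -(msum_delta G hdeg); apply: msum_ext => m0 _.
    suff -> : (m == addm m0 mu) = (m0 == subm m mu) by [].
    by apply/idP/idP => /eqP ->; rewrite ?addmK ?submK.
  apply/esym; rewrite /msum big1 // => e _; case: eqP => [hm0|]; last by rewrite mul0r.
  by rewrite hm0 mon_dvd_addm in hle.
rewrite msumC; apply: msum_ext => m0 hm0.
by rewrite msum_delta // mdeg_addm hm0.
Qed.

Lemma xpow_addm x m1 m2 : xpow x (addm m1 m2) = xpow x m1 * xpow x m2.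
Proof. by rewrite /xpow -big_split; apply: eq_bigr => v _; rewrite ffunE exprD. Qed.

Lemma xpow_mon_var x v : xpow x (mon_var v) = x v.
Proof.
rewrite /xpow (bigD1 v) //= ffunE eqxx expr1 big1 ?mulr1 // => u nu.
by rewrite ffunE (negbTE nu) expr0.
Qed.

Lemma xpow_mon0 x : xpow x mon0 = 1.
Proof. by rewrite /xpow big1 // => v _; rewrite ffunE expr0. Qed.

Lemma evalf0 a x : evalf a (fun _ => 0) x = 0.
Proof. by rewrite evalfE /msum big1 // => e _; rewrite mul0r. Qed.

Lemma evalfD a f g x : evalf a (fun m => f m + g m) x = evalf a f x + evalf a g x.
Proof. by rewrite !evalfE /msum -big_split; apply: eq_bigr => e _; rewrite mulrDl. Qed.

Lemma evalfZ a c f x : evalf a (fun m => c * f m) x = c * evalf a f x.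
Proof. by rewrite !evalfE -msumZ; apply: msum_ext => m _; rewrite mulrA. Qed.

Lemma evalf_sum a (T : Type) (r : seq T) (G : T -> mform F n) x :
  evalf a (fun m => \sum_(t <- r) G t m) x = \sum_(t <- r) evalf a (G t) x.
Proof.
rewrite evalfE; under eq_bigr do rewrite evalfE.
by rewrite -msum_sum; apply: msum_ext => m _; rewrite mulr_suml.
Qed.

Lemma evalf_mulmon a mu g x :
  evalf (addmd a (mdeg mu)) (mulmon mu g) x = xpow x mu * evalf a g x.
Proof.
rewrite !evalfE -msumZ -(msum_shift a mu); apply: msum_ext => m _.
have -> : mulmon mu g m = if mon_dvd mu m then g (subm m mu) else 0 by [].
case hle : (mon_dvd mu m); last by rewrite mul0r.
by rewrite -{2}(submK hle) xpow_addm mulrA mulrC.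
Qed.

Definition linform (i : 'I_k) (w : 'rV[F]_(n i).+1) : mform F n :=
  fun m => \sum_(j < (n i).+1) w 0 j * (m == mon_var (mvar j))%:R.

Lemma evalf_linform i (w : 'rV[F]_(n i).+1) x :
  evalf (unitmd i) (linform w) x = \sum_(j < (n i).+1) w 0 j * x (mvar j).
Proof.
rewrite evalfE (msum_ext (G2 := fun m =>
  \sum_j w 0 j * ((m == mon_var (mvar j))%:R * xpow x m))).
  rewrite msum_sum; apply: eq_bigr => j _.
  by rewrite msumZ msum_delta ?mdeg_mon_var // xpow_mon_var.
by move=> m _; rewrite /linform mulr_suml; apply: eq_bigr => j _; rewrite mulrA.
Qed.

Lemma linform0 i : linform (0 : 'rV[F]_(n i).+1) = (fun _ => 0).
Proof.
by apply: functional_extensionality => m; rewrite /linform big1 // => j _; rewrite mxE mul0r.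
Qed.

Lemma linformD i (w1 w2 : 'rV[F]_(n i).+1) :
  linform (w1 + w2) = (fun m => linform w1 m + linform w2 m).
Proof.
apply: functional_extensionality => m; rewrite /linform -big_split.
by apply: eq_bigr => j _; rewrite mxE mulrDl.
Qed.

Lemma linformZ i c (w : 'rV[F]_(n i).+1) :
  linform (c *: w) = (fun m => c * linform w m).
Proof.
apply: functional_extensionality => m; rewrite /linform mulr_sumr.
by apply: eq_bigr => j _; rewrite mxE mulrA.
Qed.

Lemma homog_unitmd_linform i f :
  homog (unitmd i) f -> f = linform (\row_j f (mon_var (@mvar k n i j))).
Proof.
move=> hf; apply: functional_extensionality => m; rewrite /linform.
have [f0|nz] := eqVneq (f m) 0.
  by rewrite big1 // => j _; rewrite mxE; case: eqP => [<-|]; rewrite ?f0 ?mul0r ?mulr0.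
have [j0 ->] := mdeg_unitmd (hf m nz).
rewrite (bigD1 j0) //= mxE eqxx mulr1 big1 ?addr0 // => j nj.
by rewrite eq_mon_var eq_sym (negbTE nj) mulr0.
Qed.

End Forms.

Section RowSpaceOfSubspace.
Variables (F : fieldType) (N : nat) (W : 'rV[F]_N -> Prop).
Hypotheses (W0 : W 0) (WD : forall u v, W u -> W v -> W (u + v))
  (WZ : forall c v, W v -> W (c *: v)).

Let inW (A : 'M[F]_N) := forall v, (v <= A)%MS -> W v.

Lemma inW_adds A w : inW A -> W w -> inW (A + w)%MS.
Proof.
move=> hA Ww v /sub_addsmxP [[u1 u2] /= ->]; apply: WD; first exact/hA/submxMl.
have /sub_rVP [c ->] : (u2 *m w <= w)%MS by exact: submxMl.
exact: WZ.
Qed.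

Lemma subspace_row_space : exists A : 'M[F]_N, forall v, W v <-> (v <= A)%MS.
Proof.
suff ext A : inW A -> exists2 B, inW B & forall w, W w -> (w <= B)%MS.
  have [|B hB hWB] := ext 0; first by move=> v; rewrite submx0 => /eqP ->.
  by exists B => v; split; [exact: hWB | exact: hB].
have [r] := ubnP (N - \rank A)%N; elim: r A => // r IH A hr hA.
case: (classic (forall w, W w -> (w <= A)%MS)) => [hAW|]; first by exists A.
move=> /not_all_ex_not [w hw]; have [Ww nwA] := imply_to_and _ _ hw.
apply: (IH (A + w)%MS _ (inW_adds hA Ww)).
have : (\rank A < \rank (A + w)%MS)%N.
  by apply: rank_ltmx; rewrite ltmxE addsmxSl addsmx_sub submx_refl; apply/negP.
by have := rank_leq_col (A + w)%MS; lia.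
Qed.

End RowSpaceOfSubspace.

Section IdealFunctions.
Variables (F : fieldType) (k : nat) (n : 'I_k -> nat) (I : mideal F n).
Hypothesis hI : homog_ideal I.
Implicit Types (a : multideg k) (h : (var n -> F) -> F).

Definition ideal_fun a h : Prop := exists2 g, I a g & forall x, evalf a g x = h x.

Lemma ideal_fun_ext a h1 h2 :
  ideal_fun a h1 -> (forall x, h1 x = h2 x) -> ideal_fun a h2.
Proof. by move=> [g hg hev] e; exists g => // x; rewrite hev. Qed.

Lemma ideal_fun0 a : ideal_fun a (fun _ => 0).
Proof. by exists (fun _ => 0); [exact: hi_zero | exact: evalf0]. Qed.

Lemma ideal_funD a h1 h2 :
  ideal_fun a h1 -> ideal_fun a h2 -> ideal_fun a (fun x => h1 x + h2 x).
Proof.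
move=> [g1 hg1 e1] [g2 hg2 e2]; exists (fun m => g1 m + g2 m); first exact: hi_add.
by move=> x; rewrite evalfD e1 e2.
Qed.

Lemma ideal_funZ a c h : ideal_fun a h -> ideal_fun a (fun x => c * h x).
Proof.
move=> [g hg e]; exists (fun m => c * g m); first exact: hi_scale.
by move=> x; rewrite evalfZ e.
Qed.

Lemma ideal_fun_sum a (T : Type) (r : seq T) (H : T -> (var n -> F) -> F) :
  (forall t, ideal_fun a (H t)) -> ideal_fun a (fun x => \sum_(t <- r) H t x).
Proof.
move=> hH; elim: r => [|t r IH].
  by apply: ideal_fun_ext (ideal_fun0 a) _ => x; rewrite big_nil.
by apply: ideal_fun_ext (ideal_funD (hH t) IH) _ => x; rewrite big_cons.
Qed.

Lemma ideal_fun_mulmon a mu h :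
  ideal_fun a h -> ideal_fun (addmd a (mdeg mu)) (fun x => xpow x mu * h x).
Proof.
move=> [g hg e]; exists (mulmon mu g); first exact: hi_mul.
by move=> x; rewrite evalf_mulmon e.
Qed.

Lemma ideal_fun_linform i (w : 'rV[F]_(n i).+1) : I (unitmd i) (linform w) ->
  ideal_fun (unitmd i) (fun x => \sum_(j < (n i).+1) w 0 j * x (mvar j)).
Proof. by move=> hw; exists (linform w) => // x; rewrite evalf_linform. Qed.

End IdealFunctions.

Section Projection.
Variables (F : fieldType) (k : nat) (n : 'I_k -> nat) (P : forall i, 'M[F]_((n i).+1)).

Definition proj (x : var n -> F) : var n -> F :=
  fun v => \sum_j P (tag v) (tagged v) j * x (mvar j).

Variable I : mideal F n.
Hypothesis hI : homog_ideal I.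
Hypothesis hW : forall i (j : 'I_(n i).+1), I (unitmd i) (linform (row j (1 - P i))).

Lemma ideal_fun_sub_proj i (j : 'I_(n i).+1) :
  ideal_fun I (unitmd i) (fun x => x (mvar j) - proj x (mvar j)).
Proof.
apply: ideal_fun_ext (ideal_fun_linform (hW j)) _ => x.
rewrite /proj /=; under eq_bigr do rewrite !mxE mulrBl.
rewrite sumrB (bigD1 j) //= eqxx mul1r big1 ?addr0 // => j' nj.
by rewrite eq_sym (negbTE nj) mul0r.
Qed.

Lemma ideal_fun_xpow_sub_proj m :
  ideal_fun I (mdeg m) (fun x => xpow x m - xpow (proj x) m).
Proof.
elim/monomial_ind: m => [|m [i j] IH].
  by apply: ideal_fun_ext (ideal_fun0 hI _) _ => x; rewrite !xpow_mon0 subrr.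
have hv : mdeg (mon_var (mvar j)) = unitmd i := mdeg_mon_var j.
(* x^m x_j - (P x)^m (P x)_j = (P x)_j (x^m - (P x)^m) + x^m (x_j - (P x)_j) *)
have hm1 : ideal_fun I (addmd (mdeg m) (unitmd i))
    (fun x => \sum_j' P i j j' * (x (mvar j') * (xpow x m - xpow (proj x) m))).
  apply: (ideal_fun_sum hI) => j'; apply: (ideal_funZ hI); rewrite -(mdeg_mon_var j').
  by apply: ideal_fun_ext (ideal_fun_mulmon hI _ IH) _ => x; rewrite xpow_mon_var.
have hm2 : ideal_fun I (addmd (mdeg m) (unitmd i))
    (fun x => xpow x m * (x (mvar j) - proj x (mvar j))).
  by rewrite addmdC; exact: (ideal_fun_mulmon hI m (ideal_fun_sub_proj j)).
rewrite mdeg_addm hv; apply: ideal_fun_ext (ideal_funD hI hm1 hm2) _ => x.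
under eq_bigr do rewrite mulrA.
rewrite -mulr_suml !xpow_addm !xpow_mon_var /proj /=.
by set S := \sum_(j' < _) _; ring.
Qed.

Lemma sv_proj_decomposition d p s (xs : 'I_s -> var n -> F) (c : 'I_s -> F) :
  in_span_scheme I d p ->
  (forall m, p m = \sum_(t < s) c t * sv d (xs t) m) ->
  forall m, p m = \sum_(t < s) c t * sv d (proj (xs t)) m.
Proof.
move=> hspan hdec m; rewrite hdec; apply/eqP; rewrite -subr_eq0 -sumrB.
have [hmd|hmd] := eqVneq (mdeg m) d; last first.
  by apply/eqP/big1 => t _; rewrite /sv (negbTE hmd) subrr.
have [g hg hev] := ideal_fun_xpow_sub_proj m; rewrite hmd in hg hev.
apply/eqP; rewrite -[RHS](hspan g hg).
transitivity (msum d (fun mm => \sum_t c t * (g mm * xpow (xs t) mm))).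
  rewrite msum_sum; apply: eq_bigr => t _.
  by rewrite msumZ -evalfE hev /sv hmd eqxx mulrBr.
rewrite pairingE; apply: msum_ext => mm hmm; rewrite hdec mulr_sumr; apply: eq_bigr => t _.
by rewrite /sv hmm eqxx mulrCA.
Qed.

Lemma proj_in_spans_proj x :
  (forall i (w : 'rV[F]_((n i).+1)), I (unitmd i) (linform w) -> w *m P i = 0) ->
  in_product (proj x) -> in_spans_proj I (proj x).
Proof.
move=> hperp hprod i; split => [|f hf]; first exact: hprod.
have hfw := homog_unitmd_linform (hi_homog hI hf); set w := \row_j _ in hfw.
rewrite hfw in hf *.
have /rowP hz := hperp i w hf.
rewrite evalf_linform /proj /=; under eq_bigr do rewrite mulr_sumr.
rewrite exchange_big big1 // => j' _.
have := hz j'; rewrite !mxE => hwP.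
by under eq_bigr do rewrite mulrA; rewrite -mulr_suml hwP mul0r.
Qed.

End Projection.

Lemma ideal_linear_projector (F : fieldType) (k : nat) (n : 'I_k -> nat) (I : mideal F n) :
  homog_ideal I ->
  exists P : forall i, 'M[F]_((n i).+1),
    (forall i (j : 'I_(n i).+1), I (unitmd i) (linform (row j (1 - P i)))) /\
    (forall i (w : 'rV[F]_((n i).+1)), I (unitmd i) (linform w) -> w *m P i = 0).
Proof.
move=> hI.
have hA i : exists A : 'M[F]_((n i).+1), forall w, I (unitmd i) (linform w) <-> (w <= A)%MS.
  apply: subspace_row_space => [|u v hu hv|c v hv].
  - by rewrite linform0; exact: hi_zero.
  - by rewrite linformD; exact: hi_add.
  - by rewrite linformZ; exact: hi_scale.
pose A i := proj1_sig (constructive_indefinite_description _ (hA i)).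
have hAi i : forall w, I (unitmd i) (linform w) <-> (w <= A i)%MS :=
  proj2_sig (constructive_indefinite_description _ (hA i)).
(* pinvmx A *m A is the identity on the row space of A *)
exists (fun i => 1 - pinvmx (A i) *m A i); split => [i j|i w /hAi hw].
  by apply/hAi; rewrite opprB addrC subrK row_mul submxMl.
by rewrite mulmxBr mulmx1 mulmxA mulmxKpV // subrr.
Qed.

Section Rank.
Variables (F : fieldType) (k : nat) (n : 'I_k -> nat) (d : multideg k) (p : mform F n).

Lemma sv_eq0_of_not_in_product (y : var n -> F) :
  (forall i, (0 < d i)%N) -> ~ in_product y -> forall m, sv d y m = 0.
Proof.
move=> hd /not_all_ex_not [i nb] m.
have y0 (j : 'I_(n i).+1) : y (mvar j) = 0 by apply: NNPP => h; apply: nb; exists j; exact/eqP.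
rewrite /sv; case: eqP => // hmd.
have [j hj] : exists j : 'I_(n i).+1, m (mvar j) != 0%N.
  apply/existsP; apply: contraT; rewrite negb_exists => /forallP h0.
  have := hd i; rewrite -hmd /mdeg ffunE big1 // => j _.
  by apply/eqP; have := h0 j; rewrite negbK.
by rewrite (bigD1 (mvar j)) //= y0 expr0n (negbTE hj) mul0r.
Qed.

Lemma rank_le_sub (Q1 Q2 : (var n -> F) -> Prop) s :
  (forall x, Q1 x -> Q2 x) -> rank_le Q1 d p s -> rank_le Q2 d p s.
Proof. by move=> hQ [xs [c [hx hdec]]]; exists xs, c; split=> // t; apply: hQ. Qed.

Lemma rank_le_of_sv_eq0 (Q : (var n -> F) -> Prop) s (ys : 'I_s -> var n -> F) (c : 'I_s -> F) :
  (exists m, p m != 0) ->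
  (forall t, ~ Q (ys t) -> forall m, sv d (ys t) m = 0) ->
  (forall m, p m = \sum_(t < s) c t * sv d (ys t) m) -> rank_le Q d p s.
Proof.
move=> [m0 hm0] hQ hdec.
have [t0 Qt0] : exists t0, Q (ys t0).
  apply: NNPP => none; move: hm0; rewrite hdec big1 ?eqxx // => t _.
  by rewrite hQ ?mulr0 // => Qt; apply: none; exists t.
exists (fun t => if excluded_middle_informative (Q (ys t)) then ys t else ys t0),
  (fun t => if excluded_middle_informative (Q (ys t)) then c t else 0); split.
  by move=> t; case: excluded_middle_informative.
move=> m; rewrite hdec; apply: eq_bigr => t _.
by case: excluded_middle_informative => // nQ; rewrite hQ // mulr0 mul0r.
Qed.

Lemma is_rank_iff (Q1 Q2 : (var n -> F) -> Prop) :
  (forall s, rank_le Q1 d p s <-> rank_le Q2 d p s) ->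
  forall r, is_rank Q1 d p r <-> is_rank Q2 d p r.
Proof.
move=> hQ r; split=> -[hr hmin]; split=> [|s hs]; try exact/hQ.
- by move/hQ; exact: hmin.
- by move/hQ; exact: hmin.
Qed.

End Rank.

Theorem mainTheorem7 (F : closedFieldType) (k : nat) (n : 'I_k -> nat)
  (d : multideg k) (hd : forall i, (0 < d i)%N)
  (p : mform F n) (hp : homog d p) (hp0 : exists m, p m != 0)
  (I : mideal F n) (hI : zero_dim_scheme I)
  (hspan : in_span_scheme I d p)
  (hmin : forall J : mideal F n, closed_subscheme J -> subscheme J I ->
            (exists a f, J a f /\ ~ I a f) -> ~ in_span_scheme J d p) :
  forall r : nat,
    is_rank (@in_product F k n) d p r <-> is_rank (in_spans_proj I) d p r.
Proof.
have hI0 : homog_ideal I by case: hI => -[].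
have [P [hW hperp]] := ideal_linear_projector hI0.
apply: is_rank_iff => s; split; last by apply: rank_le_sub => x hx i; case: (hx i).
move=> [xs [c [_ hdec]]].
apply: (rank_le_of_sv_eq0 (ys := fun t => proj P (xs t)) (c := c) hp0).
  move=> t hQ; apply: sv_eq0_of_not_in_product hd _ => hprod.
  exact/hQ/(proj_in_spans_proj hI0 hperp).
exact: (sv_proj_decomposition hI0 hW hspan hdec).
Qed.
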